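(* Let $k\ge2$ and $n\ge3$. Every monomial occurring in $\mathcal{F}_{n,k}(x)$ has exponent at least $r_{n,k}$, and the coefficient of $x^{r_{n,k}}$ equals $\binom{q_{n,k}+r_{n,k}}{q_{n,k}}$. In other words, the lowest-degree term of $\mathcal{F}_{n,k}(x)$ is $\binom{q_{n,k}+r_{n,k}}{r_{n,k}}x^{r_{n,k}}$.
   Context: For $k\ge2$, the polynomials $\mathcal{F}_{n,k}(x)\in\mathbb{Z}[x]$ ($n\in\mathbb{Z}$) are defined by $\mathcal{F}_{1,k}=1$, $\mathcal{F}_{n,k}=0$ for $n=0,-1,\dots,-(k-2)$, and $\mathcal{F}_{n,k}(x)=\sum_{j=1}^{k}x^{k-j}\mathcal{F}_{n-j,k}(x)$ for all $n\in\mathbb{Z}$. This recurrence is used upwards for $n\ge2$, and downwards for $n\le-(k-1)$ as $\mathcal{F}_{n,k}=\mathcal{F}_{n+k,k}-\sum_{j=1}^{k-1}x^j\mathcal{F}_{n+j,k}$. For $n>0$, set $q_{n,k}=\lfloor (n-2)/k\rfloor$ and let $r_{n,k}\in\{0,\dots,k-1\}$ be the residue of $(k-1)(n-1)$ modulo $k$. Then $n-1=k(q_{n,k}+1)-r_{n,k}$. *)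

From mathcomp Require Import all_boot all_order all_algebra.
Set Implicit Arguments. Unset Strict Implicit. Unset Printing Implicit Defensive.
Import GRing.Theory.
Local Open Scope ring_scope.

(* F_0 = 0, F_1 = 1, and for n >= 2
     F_n = \sum_{j=1}^{k} x^{k-j} F_{n-j},
   where every term with n - j <= 0 is 0 (these indices lie in
   {-(k-2),...,0}, where F is 0 by definition).  Implemented with fuel
   (fuel = n suffices since indices strictly decrease). *)
Fixpoint Faux (k : nat) (fuel : nat) (n : nat) : {poly int} :=
  match fuel with
  | 0%N => 0
  | fuel'.+1 =>
    match n with
    | 0%N => 0
    | 1%N => 1
    | _ => \sum_(1 <= j < k.+1 | (j < n)%N) 'X^(k - j) * Faux k fuel' (n - j)
    end
  end.

Definition Fpoly (n k : nat) : {poly int} := Faux k n n.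

Definition qnk (n k : nat) : nat := ((n - 2) %/ k)%N.
Definition rnk (n k : nat) : nat := (((k - 1) * (n - 1)) %% k)%N.

(* Every exponent i occurring in F_n satisfies i = -(n-1) (mod k): multiplying
   F_(n-j) by x^(k-j) preserves this congruence.  As r_(n,k) is the least
   natural number in that class, no exponent lies below it.  Writing
   n - 1 = k(q+1) - r, the coefficient of x^r in F_n only receives the terms
   j = k - r + t with 0 <= t <= r, each being the coefficient of x^t in F_(kq-t+1),
   which is the lowest coefficient for the pair (q-1, t) (or just F_1 = 1 when
   q = 0).  Induction on q and the hockey-stick identity
   sum_(t <= r) C(q-1+t, q-1) = C(q+r, q) then give the value. *)

From mathcomp Require Import all_boot all_order all_algebra.
From mathcomp Require Import zify.
Import GRing.Theory.
Local Open Scope ring_scope.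

Lemma FauxSS k f n : Faux k f.+1 n.+2 =
  \sum_(1 <= j < k.+1 | (j < n.+2)%N) 'X^(k - j) * Faux k f (n.+2 - j).
Proof. by []. Qed.

Lemma Faux_fuel k f g n : (n <= f)%N -> (n <= g)%N -> Faux k f n = Faux k g n.
Proof.
elim: f g n => [|f IH] [|g] n hf hg; try by have -> : n = 0%N by lia.
case: n hf hg => [|[|n]] hf hg //; rewrite !FauxSS.
rewrite !(big_nat_cond _ _ _ _ (fun j => _ < _)%N).
apply: eq_bigr => j /andP[/andP[hj1 hjk] hjn]; congr (_ * _); apply: IH; lia.
Qed.

Lemma Fpoly_rec n k : (2 <= n)%N ->
  Fpoly n k = \sum_(1 <= j < k.+1 | (j < n)%N) 'X^(k - j) * Fpoly (n - j) k.
Proof.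
case: n => [|[|n]] // _; rewrite {1}/Fpoly FauxSS.
rewrite !(big_nat_cond _ _ _ _ (fun j => _ < _)%N).
apply: eq_bigr => j /andP[/andP[hj1 hjk] hjn]; congr (_ * _); apply: Faux_fuel; lia.
Qed.

Lemma Fpoly1 k : Fpoly 1 k = 1. Proof. by []. Qed.

Lemma Fpoly_coef_eq0 n k i : ~~ (k %| i + n - 1)%N -> (Fpoly n k)`_i = 0.
Proof.
elim/ltn_ind: n i => n IH i ndvd.
case: n IH ndvd => [|[|n]] IH ndvd.
- by rewrite coef0.
- by rewrite Fpoly1 coef1; case: i ndvd => [|i]; rewrite ?add0n ?subnn ?dvdn0.
rewrite Fpoly_rec // coef_sum big_nat_cond big1 // => j /andP[/andP[hj1 hjk] hjn].
rewrite coefXnM; case: ifP => hik //; apply: IH; first lia.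
apply: contra ndvd => hdvd.
have -> : (i + n.+2 - 1 = (i - (k - j) + (n.+2 - j) - 1) + k)%N by lia.
by rewrite dvdn_addl.
Qed.

Lemma Fpoly_coef_low_rec k q r : (r < k)%N ->
  (Fpoly (k * q.+1 - r).+1%N k)`_r =
  \sum_(0 <= t < r.+1 | (t <= k * q)%N) (Fpoly (k * q - t).+1%N k)`_t.
Proof.
move=> hrk; rewrite mulnS Fpoly_rec; last lia.
rewrite coef_sum (big_cat_nat _ (n := (k - r)%N)) /=; [|lia|lia].
rewrite big_nat_cond big1 ?add0r => [|j /andP[/andP[hj1 hjr] _]]; last first.
  by rewrite coefXnM ifT //; lia.
rewrite -{1}(add0n (k - r)%N) big_addn (_ : (k.+1 - (k - r) = r.+1)%N); last lia.
rewrite big_nat_cond [RHS]big_nat_cond; apply: eq_big => [t|t /andP[/andP[_ htr] htq]].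
  by congr (_ && _); apply/idP/idP; lia.
rewrite coefXnM ifF; last lia.
congr (_`_ _); [congr Fpoly|]; lia.
Qed.

Lemma hockey_stick q r :
  (\sum_(0 <= t < r.+1) 'C(q + t, q))%N = 'C((q + r).+1, q.+1).
Proof.
elim: r => [|r IH]; first by rewrite big_nat1 addn0 !binn.
by rewrite big_nat_recr //= IH addnS binS.
Qed.

Lemma Fpoly_coef_low k q r : (r < k)%N ->
  (Fpoly (k * q.+1 - r).+1%N k)`_r = ('C(q + r, q))%:R.
Proof.
elim: q r => [|q IH] r hrk; rewrite Fpoly_coef_low_rec //.
  by rewrite muln0 big_mkcond big_nat_recl //= big1 // addr0 bin0 subn0 Fpoly1 coef1.
transitivity (\sum_(0 <= t < r.+1) ('C(q + t, q))%:R : int).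
  rewrite big_nat_cond [RHS]big_nat_cond.
  apply: eq_big => [t|t /andP[/andP[_ htr] _]]; last by apply: IH; lia.
  by apply: andb_id2l => /andP[_ htr]; rewrite mulnS; apply/idP; lia.
by rewrite -natr_sum hockey_stick addSn.
Qed.

Lemma rnk_qnk_eq n k : (1 < n)%N -> (0 < k)%N -> (n - 1 + rnk n k = k * (qnk n k).+1)%N.
Proof.
case: n => [|[|m]] // _; case: k => [|k] // _.
rewrite /rnk /qnk !subSS !subn0.
have em := divn_eq m k.+1; set q := (m %/ k.+1)%N in em *; set s := (m %% k.+1)%N in em.
have hs : (s <= k)%N by rewrite -ltnS ltn_pmod.
have -> : (k * m.+1 = (k * q + s) * k.+1 + (k - s))%N.
  by rewrite em; move: (subnK hs); nia.
rewrite modnMDl modn_small; last lia.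
rewrite em mulnS; nia.
Qed.

Theorem mainTheorem3 (k n : nat) (hk : (2 <= k)%N) (hn : (3 <= n)%N) :
  (forall i : nat, (i < rnk n k)%N -> (Fpoly n k)`_i = 0) /\
  (Fpoly n k)`_(rnk n k) = ('C(qnk n k + rnk n k, qnk n k))%:R.
Proof.
have hrk : (rnk n k < k)%N by rewrite ltn_pmod //; lia.
have hqr := @rnk_qnk_eq n k ltac:(lia) ltac:(lia).
set q := qnk n k in hqr *; set r := rnk n k in hrk hqr *; clearbody q r.
have -> : n = (k * q.+1 - r).+1%N by lia.
split; last exact: Fpoly_coef_low.
move=> i hir; apply: Fpoly_coef_eq0; rewrite /dvdn.
have -> : (i + (k * q.+1 - r).+1 - 1 = q * k + (k - (r - i)))%N by rewrite mulnS; lia.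
by rewrite modnMDl modn_small; lia.
Qed.
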